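(* Fix $s\in[-1,1)$. Let $\hat{\varrho}$ be a single-mode bosonic state that is P-classical, i.e. its $s$-parameterized quasiprobability distribution in position-momentum coordinates can be written as $W_{\hat{\varrho}}(q,p;s)=\int dq'\,dp'\,P(q',p')\,W_{q',p'}(q,p;s)$ with $P\ge 0$ and $\int P=1$. Let $w(q,0;s)=\int dp\,W_{\hat{\varrho}}(q,p;s)$ be its $s$-parameterized position tomogram. Let $G\ge 0$ be a normalized function on $\mathbb{R}$ with finite support and define the fictitious tomogram $$w_{\rm f}(p,\tfrac{\pi}{2};s)=\frac{1}{\sqrt{\pi(1-s)}}\int dp'\,G(p')\,e^{-\frac{(p-p')^2}{1-s}}.$$ Then the function $W_{\rm f}(q,p;s):=w(q,0;s)\,w_{\rm f}(p,\tfrac{\pi}{2};s)$ satisfies $$W_{\rm f}(q,p;s)=\int dq'\,dp'\,F(q')G(p')\,W_{q',p'}(q,p;s),\qquad F(q')=\int dp'\,P(q',p'),$$ so that $W_{\rm f}$ is the $s$-parameterized quasiprobability distribution of a bona fide P-classical quantum state (with P-function $F(q')G(p')$). Consequently, if $W_{\rm f}(q,p;s)$ is not the $s$-parameterized distribution of any legitimate quantum state, then $\hat{\varrho}$ is P-nonclassical. In particular this applies to the choices $w_{\rm f}(p,\tfrac{\pi}{2};s)=\frac{1}{\sqrt{\pi(1-s)}}e^{-p^2/(1-s)}$ (the vacuum tomogram) and $w_{\rm f}(p,\tfrac{\pi}{2};s)=w(p,0;s)$ (the state's own tomogram evaluated at $p$).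
   Context: For $q_0,p_0\in\mathbb{R}$ (corresponding to the coherent state $|\alpha\rangle$ with $q_0=\sqrt{2}\,\mathrm{Re}\,\alpha$, $p_0=\sqrt{2}\,\mathrm{Im}\,\alpha$), its $s$-parameterized quasiprobability distribution in position-momentum coordinates is $W_{q_0,p_0}(q,p;s)=\frac{1}{\pi(1-s)}\exp\{-[(q-q_0)^2+(p-p_0)^2]/(1-s)\}$. The $s$-parameterized quasiprobability distribution of an operator $\hat\Lambda$ is $\mathscr{W}_{\hat\Lambda}(\alpha;s)=\mathrm{Tr}\,\hat\Lambda\hat{T}(\alpha;s)$, where $\hat{T}(\alpha;s)=\frac{1}{\pi}\int d^2\xi\,\exp\{\alpha\xi^*-\alpha^*\xi+\tfrac{s}{2}|\xi|^2\}\exp\{\xi a^\dagger-\xi^*a\}$; $s=1$ gives the P-function, $s=0$ the Wigner function, $s=-1$ the Q-function. A state is P-classical if its P-function is a nonnegative probability density, and P-nonclassical otherwise. *)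

From HB Require Import structures.
From mathcomp Require Import all_boot all_order all_algebra.
From mathcomp Require Import all_classical all_reals all_analysis.
Set Implicit Arguments. Unset Strict Implicit. Unset Printing Implicit Defensive.
Import Order.TTheory GRing.Theory Num.Theory numFieldNormedType.Exports.
Local Open Scope classical_set_scope.
Local Open Scope ring_scope.

Section QuasiProb.
Variable R : realType.

Definition Lint (f : R -> R) : R := Rintegral (@lebesgue_measure R) setT f.

(* s-parameterized quasiprobability distribution of the coherent state
   with phase-space centre (q0,p0) *)
Definition Wcoh (s q0 p0 q p : R) : R :=
  (pi * (1 - s))^-1 * expR (- ((q - q0) ^+ 2 + (p - p0) ^+ 2) / (1 - s)).

Definition is_pdf2 (P : R -> R -> R) : Prop :=
  [/\ measurable_fun setT (fun z : R * R => P z.1 z.2),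
      (forall x y, 0 <= P x y) &
      (\int[@lebesgue_measure R]_x \int[@lebesgue_measure R]_y (P x y)%:E
        = 1%:E)%E].

Definition is_pdf1 (G : R -> R) : Prop :=
  [/\ measurable_fun setT G, (forall x, 0 <= G x) &
      (\int[@lebesgue_measure R]_x (G x)%:E = 1%:E)%E].

Definition bounded_support (G : R -> R) : Prop :=
  exists M : R, forall x, M < `|x| -> G x = 0.

Definition sdist (s : R) (P : R -> R -> R) (q p : R) : R :=
  Lint (fun q' => Lint (fun p' => P q' p' * Wcoh s q' p' q p)).

Definition tomogram (W : R -> R -> R) (q : R) : R := Lint (fun p => W q p).

Definition marginal (P : R -> R -> R) (q' : R) : R := Lint (fun p' => P q' p').

Definition fict_tomo (s : R) (G : R -> R) (p : R) : R :=
  (Num.sqrt (pi * (1 - s)))^-1 *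
    Lint (fun p' => G p' * expR (- (p - p') ^+ 2 / (1 - s))).

Definition vac_tomo (s p : R) : R :=
  (Num.sqrt (pi * (1 - s)))^-1 * expR (- p ^+ 2 / (1 - s)).

Definition Pclassical_sdist (s : R) (W : R -> R -> R) : Prop :=
  exists P, is_pdf2 P /\ forall q p, W q p = sdist s P q p.

End QuasiProb.

From mathcomp Require Import all_boot all_order all_algebra.
From mathcomp Require Import all_classical all_reals all_analysis.
From mathcomp Require Import measurable_realfun lebesgue_integral_fubini.
From mathcomp Require Import normal_distribution.
From mathcomp Require Import ring.
Import Order.TTheory GRing.Theory Num.Theory.
Local Open Scope ring_scope.

(* The s-parameterized distribution of a coherent state factorizes as
   W_{q0,p0}(q,p;s) = g(q - q0) g(p - p0) / (pi (1 - s)), g(x) = exp(-x^2/(1 - s)),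
   and g has mass sqrt(pi (1 - s)).  Integrating a P-mixture over p (Tonelli) thus
   leaves the Gaussian smoothing of the marginal F of P: the tomogram w is the
   fictitious tomogram built from F.  For a product density F(q') G(p') the same
   factorization splits the double integral, so its distribution is w(q) w_f(p),
   and a product of probability densities is again one. *)

Section LebesgueIntegral.
Context {R : realType}.
Local Notation mu := (@lebesgue_measure R).
(* Lebesgue measure lives on [measurableTypeR R]; product domains must be typed with
   it for the Fubini-Tonelli lemmas to unify. *)
Local Notation RR := (measurableTypeR R).

Lemma LintE (f : R -> R) : Lint f = fine (\int[mu]_x (f x)%:E)%E.
Proof. by []. Qed.

Lemma fine_EFinM (k : R) (x : \bar R) : fine (k%:E * x)%E = k * fine x.
Proof. by case: x => [r||] //=; rewrite mulr0 /mule /=; repeat case: ifP. Qed.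

Lemma LintZl (k : R) (f : R -> R) : 0 <= k ->
  measurable_fun setT f -> (forall x, 0 <= f x) ->
  Lint (fun x => k * f x) = k * Lint f.
Proof.
move=> k0 mf f0; rewrite !LintE -fine_EFinM; congr fine.
under eq_integral do rewrite EFinM.
apply: ge0_integralZl_EFin => //; last exact/measurable_EFinP.
by move=> x _; rewrite lee_fin.
Qed.

Local Open Scope ereal_scope.

Lemma measurable_fun_integral_section (K : R -> R -> R) :
  measurable_fun setT (fun z : RR * RR => K z.1 z.2) -> (forall x y, (0 <= K x y)%R) ->
  measurable_fun setT (fun x => \int[mu]_y (K x y)%:E).
Proof.
move=> mK K0.
apply: (@measurable_fun_fubini_tonelli_F _ _ _ _ _ mu (fun z => (K z.1 z.2)%:E)).
- exact/measurable_EFinP.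
- by move=> z; rewrite lee_fin.
Qed.

Lemma integral_fineM (I : R -> \bar R) (h : R -> R) :
  measurable_fun setT I -> (forall x, 0 <= I x) -> \int[mu]_x I x < +oo ->
  measurable_fun setT h -> (forall x, (0 <= h x)%R) ->
  \int[mu]_x (fine (I x) * h x)%:E = \int[mu]_x (I x * (h x)%:E).
Proof.
move=> mI I0 Ioo mh h0.
have iI : mu.-integrable setT I.
  by apply/integrableP; split => //; under eq_integral do rewrite gee0_abs //.
apply: ae_eq_integral => //.
- apply/measurable_EFinP; apply: measurable_funM => //.
  exact: (measurableT_comp (fine_measurable measurableT)).
- by apply: emeasurable_funM => //; exact/measurable_EFinP.
- apply: filterS (integrable_ae measurableT iI) => x /(_ Logic.I) fin _.
  by rewrite EFinM fineK.
Qed.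

Lemma iterated_integralZl (P : R -> R -> R) (k : R) :
  measurable_fun setT (fun z : RR * RR => P z.1 z.2) -> (forall x y, (0 <= P x y)%R) ->
  (0 <= k)%R ->
  \int[mu]_x \int[mu]_y (k * P x y)%:E = k%:E * \int[mu]_x \int[mu]_y (P x y)%:E.
Proof.
move=> mP P0 k0; rewrite -ge0_integralZl_EFin //; last 2 first.
- by move=> x _; apply: integral_ge0 => y _; rewrite lee_fin.
- exact: measurable_fun_integral_section.
apply: eq_integral => x _; under eq_integral do rewrite EFinM.
rewrite ge0_integralZl_EFin //.
- by move=> y _; rewrite lee_fin.
- by apply/measurable_EFinP; exact: (measurableT_comp mP (pair1_measurable x)).
Qed.

Lemma le_iterated_integral (K L : R -> R -> R) :
  measurable_fun setT (fun z : RR * RR => K z.1 z.2) -> (forall x y, (0 <= K x y)%R) ->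
  measurable_fun setT (fun z : RR * RR => L z.1 z.2) ->
  (forall x y, (K x y <= L x y)%R) ->
  \int[mu]_x \int[mu]_y (K x y)%:E <= \int[mu]_x \int[mu]_y (L x y)%:E.
Proof.
move=> mK K0 mL KL.
have L0 x y : (0 <= L x y)%R by exact: le_trans (K0 x y) (KL x y).
apply: ge0_le_integral => //.
- by move=> x _; apply: integral_ge0 => y _; rewrite lee_fin.
- exact: measurable_fun_integral_section.
- exact: measurable_fun_integral_section.
move=> x _; apply: ge0_le_integral => //.
- by move=> y _; rewrite lee_fin.
- by apply/measurable_EFinP; exact: (measurableT_comp mK (pair1_measurable x)).
- by apply/measurable_EFinP; exact: (measurableT_comp mL (pair1_measurable x)).
- by move=> y _; rewrite lee_fin.
Qed.

Lemma iterated_integral_le_scale (K P : R -> R -> R) (k : R) :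
  measurable_fun setT (fun z : RR * RR => K z.1 z.2) -> (forall x y, (0 <= K x y)%R) ->
  measurable_fun setT (fun z : RR * RR => P z.1 z.2) -> (forall x y, (0 <= P x y)%R) ->
  (0 <= k)%R -> (forall x y, (K x y <= k * P x y)%R) ->
  \int[mu]_x \int[mu]_y (K x y)%:E <= k%:E * \int[mu]_x \int[mu]_y (P x y)%:E.
Proof.
move=> mK K0 mP P0 k0 KP; rewrite -iterated_integralZl //.
by apply: le_iterated_integral => //; exact: measurable_funM.
Qed.

Lemma Lint_iterated (K : R -> R -> R) :
  measurable_fun setT (fun z : RR * RR => K z.1 z.2) -> (forall x y, (0 <= K x y)%R) ->
  \int[mu]_x \int[mu]_y (K x y)%:E < +oo ->
  Lint (fun x => Lint (K x)) = fine (\int[mu]_x \int[mu]_y (K x y)%:E).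
Proof.
move=> mK K0 Koo; rewrite LintE; congr fine.
transitivity (\int[mu]_x (fine (\int[mu]_y (K x y)%:E) * cst 1%R x)%:E).
  by apply: eq_integral => x _; rewrite /= mulr1.
rewrite integral_fineM //.
- by apply: eq_integral => x _; rewrite mule1.
- exact: measurable_fun_integral_section.
- by move=> x; apply: integral_ge0 => y _; rewrite lee_fin.
Qed.

Lemma iterated_integral3_swap (K : R -> R -> R -> R) :
  measurable_fun setT (fun w : RR * RR * RR => K w.1.1 w.1.2 w.2) ->
  (forall x y z, (0 <= K x y z)%R) ->
  \int[mu]_z \int[mu]_x \int[mu]_y (K x y z)%:E =
  \int[mu]_x \int[mu]_y \int[mu]_z (K x y z)%:E.
Proof.
move=> mK K0.
rewrite (fubini_tonelli (fun v : RR * RR => \int[mu]_y (K v.2 y v.1)%:E)); last 2 first.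
- apply: (@measurable_fun_fubini_tonelli_F _ _ _ _ _ mu
            (fun w : RR * RR * RR => (K w.1.2 w.2 w.1.1)%:E)); last by move=> w; rewrite lee_fin.
  apply/measurable_EFinP; apply: (measurableT_comp mK (measurable_fun_pair
    (measurable_fun_pair (measurableT_comp measurable_snd measurable_fst) measurable_snd)
    (measurableT_comp measurable_fst measurable_fst))).
- by move=> v; apply: integral_ge0 => y _; rewrite lee_fin.
apply: eq_integral => x _ /=.
rewrite (fubini_tonelli (fun v : RR * RR => (K x v.2 v.1)%:E)) //; last by move=> v; rewrite lee_fin.
apply/measurable_EFinP; apply: (measurableT_comp mK (measurable_fun_pair
  (measurable_fun_pair (measurable_cst x) measurable_snd) measurable_fst)).
Qed.

(* The finiteness hypotheses matter because [Lint] returns [0] on divergent integrals. *)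
Lemma Lint_iterated3_swap (K : R -> R -> R -> R) :
  measurable_fun setT (fun w : RR * RR * RR => K w.1.1 w.1.2 w.2) ->
  (forall x y z, (0 <= K x y z)%R) ->
  (forall z, \int[mu]_x \int[mu]_y (K x y z)%:E < +oo) ->
  (forall x y, \int[mu]_z (K x y z)%:E < +oo) ->
  \int[mu]_x \int[mu]_y \int[mu]_z (K x y z)%:E < +oo ->
  Lint (fun z => Lint (fun x => Lint (fun y => K x y z))) =
  Lint (fun x => Lint (fun y => Lint (fun z => K x y z))).
Proof.
move=> mK K0 Kz Kxy Kxyz.
have fine_ge0K (I : \bar R) : 0 <= I -> I < +oo -> (fine I)%:E = I.
  by move=> I0 Ioo; rewrite fineK // ge0_fin_numE.
transitivity (fine (\int[mu]_z \int[mu]_x \int[mu]_y (K x y z)%:E)).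
  rewrite LintE; apply: (congr1 fine); apply: eq_integral => z _.
  rewrite Lint_iterated // ?fine_ge0K //.
  - by apply: integral_ge0 => x _; apply: integral_ge0 => y _; rewrite lee_fin.
  - exact: (measurableT_comp mK (pair2_measurable z)).
have LintK x y : (Lint (fun z => K x y z))%:E = \int[mu]_z (K x y z)%:E.
  by rewrite LintE fine_ge0K // integral_ge0 // => z _; rewrite lee_fin.
have LintKE : \int[mu]_x \int[mu]_y (Lint (fun z => K x y z))%:E =
              \int[mu]_x \int[mu]_y \int[mu]_z (K x y z)%:E.
  by apply: eq_integral => x _; apply: eq_integral => y _; exact: LintK.
have mKxy : measurable_fun setT (fun v : RR * RR => \int[mu]_z (K v.1 v.2 z)%:E).
  apply: (@measurable_fun_fubini_tonelli_F _ _ _ _ _ mu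
            (fun w : RR * RR * RR => (K w.1.1 w.1.2 w.2)%:E)).
  - exact/measurable_EFinP.
  - by move=> w; rewrite lee_fin.
rewrite iterated_integral3_swap //.
rewrite (@Lint_iterated (fun x y => Lint (fun z => K x y z))) ?LintKE //.
- exact: (measurableT_comp (fine_measurable measurableT) mKxy).
- by move=> x y; apply: Rintegral_ge0 => z _.
Qed.

End LebesgueIntegral.

Section PhaseSpace.
Context {R : realType}.
Local Notation mu := (@lebesgue_measure R).
Local Notation RR := (measurableTypeR R).

Definition gauss (a x : R) : R := expR (- x ^+ 2 / a).

Lemma gauss_ge0 a x : 0 <= gauss a x.
Proof. exact: expR_ge0. Qed.

Lemma gauss_le1 a x : 0 < a -> gauss a x <= 1.
Proof.
move=> a0; rewrite /gauss -expR0 ler_expR mulNr oppr_le0.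
by rewrite mulr_ge0 ?sqr_ge0 // invr_ge0 ltW.
Qed.

Lemma measurable_gauss a : measurable_fun setT (gauss a).
Proof.
apply: measurableT_comp => //; apply: measurable_funM => //.
exact/measurable_funN/measurable_funX.
Qed.

Lemma measurable_mul_gauss (a q : R) (F : R -> R) : measurable_fun setT F ->
  measurable_fun setT (fun x => F x * gauss a (q - x)).
Proof.
move=> mF; apply: measurable_funM => //; apply: measurableT_comp.
- exact: measurable_gauss.
- exact: measurable_funB.
Qed.

Lemma integral_gauss (a m : R) : 0 < a ->
  (\int[mu]_x (gauss a (x - m))%:E = (Num.sqrt (pi * a))%:E)%E.
Proof.
move=> a0; set sg := Num.sqrt (a / 2).
have sg2 : sg ^+ 2 = a / 2 by rewrite sqr_sqrtr // divr_ge0 // ltW.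
have sg0 : sg != 0 by rewrite gt_eqF // sqrtr_gt0 divr_gt0.
have peak0 : normal_peak sg != 0 by rewrite gt_eqF // normal_peak_gt0.
have gaussE x : gauss a (x - m) = normal_fun m sg x.
  by rewrite /gauss /normal_fun sg2 -mulr_natr divfK // pnatr_eq0.
have peakE : (normal_peak sg)^-1 = Num.sqrt (pi * a).
  by rewrite /normal_peak invrK sg2 -mulr_natr mulrAC divfK ?pnatr_eq0 // mulrC.
have := integral_normal_pdf m sg; rewrite normal_pdfE //=.
under eq_integral do rewrite EFinM.
rewrite ge0_integralZl_EFin //; last 3 first.
- by move=> x _; rewrite lee_fin normal_fun_ge0.
- by apply/measurable_EFinP; exact: measurable_normal_fun.
- exact: normal_peak_ge0.
move=> peak_int; under eq_integral do rewrite gaussE.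
rewrite -peakE -[LHS]mul1e -(mulVf peak0) EFinM -muleA.
by rewrite peak_int mule1.
Qed.

Lemma invr_sqrtr_sqr (x : R) : 0 <= x -> (Num.sqrt x)^-1 * (Num.sqrt x)^-1 = x^-1.
Proof. by move=> x0; rewrite -invfM -expr2 sqr_sqrtr. Qed.

Lemma WcohE (s q0 p0 q p : R) :
  Wcoh s q0 p0 q p = (pi * (1 - s))^-1 * (gauss (1 - s) (q - q0) * gauss (1 - s) (p - p0)).
Proof. by rewrite /Wcoh /gauss -expRD -mulrDl opprD. Qed.

Lemma fict_tomoE (s : R) (G : R -> R) (p : R) :
  fict_tomo s G p =
  (Num.sqrt (pi * (1 - s)))^-1 * Lint (fun p' => G p' * gauss (1 - s) (p - p')).
Proof. by []. Qed.

Lemma Wcoh_ge0 (s q0 p0 q p : R) : s < 1 -> 0 <= Wcoh s q0 p0 q p.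
Proof.
move=> s1; rewrite /Wcoh mulr_ge0 ?expR_ge0 // invr_ge0.
by rewrite mulr_ge0 ?pi_ge0 // subr_ge0 ltW.
Qed.

Lemma Wcoh_le (s q0 p0 q p : R) : s < 1 -> Wcoh s q0 p0 q p <= (pi * (1 - s))^-1.
Proof.
move=> s1; have a0 : 0 < 1 - s by rewrite subr_gt0.
rewrite WcohE ler_piMr //; first by rewrite invr_ge0 mulr_ge0 ?pi_ge0 ?ltW.
by apply: mulr_ile1; rewrite ?gauss_ge0 ?gauss_le1.
Qed.

Lemma measurable_Wcoh d (T : measurableType d) (s : R) (q0 p0 q p : T -> R) :
  measurable_fun setT q0 -> measurable_fun setT p0 ->
  measurable_fun setT q -> measurable_fun setT p ->
  measurable_fun setT (fun t => Wcoh s (q0 t) (p0 t) (q t) (p t)).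
Proof.
move=> mq0 mp0 mq mp; apply: measurable_funM => //.
apply: measurableT_comp => //; apply: measurable_funM => //.
apply/measurable_funN/measurable_funD; apply/measurable_funX.
- exact: measurable_funB.
- exact: measurable_funB.
Qed.

Lemma integral_Wcoh_momentum (s q0 p0 q : R) : s < 1 ->
  (\int[mu]_p (Wcoh s q0 p0 q p)%:E =
   ((Num.sqrt (pi * (1 - s)))^-1 * gauss (1 - s) (q - q0))%:E)%E.
Proof.
move=> s1; have a0 : 0 < 1 - s by rewrite subr_gt0.
have pa0 : 0 <= pi * (1 - s) by rewrite mulr_ge0 ?pi_ge0 ?ltW.
under eq_integral do rewrite WcohE mulrA EFinM.
rewrite ge0_integralZl_EFin //; last 3 first.
- by move=> p _; rewrite lee_fin gauss_ge0.
- apply/measurable_EFinP; apply: measurableT_comp; first exact: measurable_gauss.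
  exact: measurable_funB.
- by rewrite mulr_ge0 ?gauss_ge0 ?invr_ge0.
rewrite integral_gauss // -EFinM -invr_sqrtr_sqr //; congr (_%:E).
by rewrite mulrAC divfK // gt_eqF // sqrtr_gt0 mulr_gt0 ?pi_gt0.
Qed.

Lemma is_pdf2_product (F G : R -> R) : is_pdf1 F -> is_pdf1 G ->
  is_pdf2 (fun x y => F x * G y).
Proof.
case=> mF F0 F1 [mG G0 G1]; split.
- by apply: measurable_funM; [exact: measurableT_comp mF measurable_fst|
                              exact: measurableT_comp mG measurable_snd].
- by move=> x y; apply: mulr_ge0.
- transitivity (\int[mu]_x ((F x)%:E * \int[mu]_y (G y)%:E))%E.
    apply: eq_integral => x _; under eq_integral do rewrite EFinM.
    apply: ge0_integralZl_EFin => //; last exact/measurable_EFinP.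
    by move=> y _; rewrite lee_fin.
  by rewrite G1; under eq_integral do rewrite mule1.
Qed.

Lemma is_pdf1_marginal (P : R -> R -> R) : is_pdf2 P -> is_pdf1 (marginal P).
Proof.
case=> mP P0 P1; have mPx := measurable_fun_integral_section _ mP P0; split.
- exact: (measurableT_comp (fine_measurable measurableT) mPx).
- by move=> x; apply: fine_ge0; apply: integral_ge0 => y _; rewrite lee_fin.
- transitivity (\int[mu]_x (fine (\int[mu]_y (P x y)%:E) * cst 1 x)%:E)%E.
    by apply: eq_integral => x _; rewrite /= mulr1.
  rewrite integral_fineM ?P1 ?ltry //.
  - by under eq_integral do rewrite mule1.
  - by move=> x; apply: integral_ge0 => y _; rewrite lee_fin.
Qed.

Lemma sdist_product (s : R) (F G : R -> R) (q p : R) : s < 1 ->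
  measurable_fun setT F -> (forall x, 0 <= F x) ->
  measurable_fun setT G -> (forall x, 0 <= G x) ->
  sdist s (fun q' p' => F q' * G p') q p = fict_tomo s F q * fict_tomo s G p.
Proof.
move=> s1 mF F0 mG G0; have a0 : 0 < 1 - s by rewrite subr_gt0.
have c0 : 0 <= (Num.sqrt (pi * (1 - s)))^-1 by rewrite invr_ge0 sqrtr_ge0.
have Fg0 x : 0 <= F x * gauss (1 - s) (q - x) by rewrite mulr_ge0 ?gauss_ge0.
have Gg0 y : 0 <= G y * gauss (1 - s) (p - y) by rewrite mulr_ge0 ?gauss_ge0.
have LG0 : 0 <= Lint (fun p' => G p' * gauss (1 - s) (p - p')) by apply: Rintegral_ge0.
rewrite !fict_tomoE /sdist.
transitivity (Lint (fun q' => Lint (fun p' => G p' * gauss (1 - s) (p - p')) *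
  ((Num.sqrt (pi * (1 - s)))^-1 * (Num.sqrt (pi * (1 - s)))^-1 *
   (F q' * gauss (1 - s) (q - q'))))).
  congr Lint; apply/funext => q'.
  rewrite mulrC -LintZl ?mulr_ge0 ?gauss_ge0 //; last exact: measurable_mul_gauss.
  congr Lint; apply/funext => p'.
  by rewrite WcohE -invr_sqrtr_sqr ?mulr_ge0 ?pi_ge0 ?ltW //; ring.
have mFg := measurable_mul_gauss (1 - s) q _ mF.
have cFg0 x : 0 <= (Num.sqrt (pi * (1 - s)))^-1 * (Num.sqrt (pi * (1 - s)))^-1 *
                   (F x * gauss (1 - s) (q - x)) by rewrite !mulr_ge0 ?F0 ?gauss_ge0.
rewrite LintZl ?LintZl ?mulr_ge0 //; first ring.
exact: measurable_funM.
Qed.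

Section PositionTomogram.
Variables (s q : R) (P : R -> R -> R).
Hypotheses (s1 : s < 1) (hP : is_pdf2 P).

Let PW x y z := P x y * Wcoh s x y q z.
Let wcoh x := (Num.sqrt (pi * (1 - s)))^-1 * gauss (1 - s) (q - x).

Let a0 : 0 < 1 - s. Proof. by rewrite subr_gt0. Qed.
Let c0 : 0 <= (Num.sqrt (pi * (1 - s)))^-1. Proof. by rewrite invr_ge0 sqrtr_ge0. Qed.
Let PW0 x y z : 0 <= PW x y z.
Proof. by have [_ P0 _] := hP; rewrite mulr_ge0 ?Wcoh_ge0. Qed.
Let wcoh0 x : 0 <= wcoh x. Proof. by rewrite mulr_ge0 ?gauss_ge0. Qed.
Let measurable_wcoh : measurable_fun setT wcoh.
Proof. exact: (measurable_mul_gauss _ _ (fun=> _) (measurable_cst _)). Qed.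

Lemma integral_PW_momentum x y : (\int[mu]_z (PW x y z)%:E = (P x y * wcoh x)%:E)%E.
Proof.
have [_ P0 _] := hP; under eq_integral do rewrite EFinM.
rewrite ge0_integralZl_EFin // ?integral_Wcoh_momentum //.
- by move=> z _; rewrite lee_fin Wcoh_ge0.
- by apply/measurable_EFinP; exact: measurable_Wcoh.
Qed.

Lemma tomogram_sdist_swap :
  tomogram (sdist s P) q = Lint (fun x => Lint (fun y => Lint (fun z => PW x y z))).
Proof.
have [mP P0 P1] := hP.
have pa0 : 0 <= (pi * (1 - s))^-1 by rewrite invr_ge0 mulr_ge0 ?pi_ge0 ?ltW.
have mPWz z : measurable_fun setT (fun v : RR * RR => PW v.1 v.2 z).
  by apply: measurable_funM => //; exact: measurable_Wcoh.
have mPwcoh : measurable_fun setT (fun v : RR * RR => P v.1 v.2 * wcoh v.1).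
  by apply: measurable_funM => //; exact: (measurableT_comp measurable_wcoh measurable_fst).
apply: Lint_iterated3_swap => //.
- apply: measurable_funM; first exact: (measurableT_comp mP measurable_fst).
  apply: measurable_Wcoh => //.
  + exact: (measurableT_comp measurable_fst measurable_fst).
  + exact: (measurableT_comp measurable_snd measurable_fst).
- move=> z; apply: (le_lt_trans (iterated_integral_le_scale _ _ _
    (mPWz z) (fun x y => PW0 x y z) mP P0 pa0 _)); last by rewrite P1 mule1 ltry.
  by move=> x y; rewrite /PW mulrC; apply: ler_wpM2r => //; exact: Wcoh_le.
- by move=> x y; rewrite integral_PW_momentum ltry.
- under eq_integral do under eq_integral do rewrite integral_PW_momentum.
  apply: (le_lt_trans (iterated_integral_le_scale _ _ _
    mPwcoh (fun x y => mulr_ge0 (P0 x y) (wcoh0 x)) mP P0 c0 _)); last by rewrite P1 mule1 ltry.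
  move=> x y; rewrite mulrC; apply: ler_wpM2r => //.
  by apply: ler_piMr => //; exact: gauss_le1.
Qed.

Lemma tomogram_sdist : tomogram (sdist s P) q = fict_tomo s (marginal P) q.
Proof.
have [mF F0 _] := is_pdf1_marginal _ hP; have [mP P0 _] := hP.
rewrite tomogram_sdist_swap.
transitivity (Lint (fun x => marginal P x * wcoh x)).
  congr Lint; apply/funext => x; rewrite mulrC -LintZl //; last first.
    exact: (measurableT_comp mP (pair1_measurable x)).
  by congr Lint; apply/funext => y; rewrite LintE integral_PW_momentum /= mulrC.
rewrite fict_tomoE -LintZl //; last 2 first.
- exact: measurable_mul_gauss.
- by move=> x; rewrite mulr_ge0 ?gauss_ge0.
by congr Lint; apply/funext => x; rewrite /wcoh mulrCA.
Qed.

End PositionTomogram.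

Lemma fict_tomo_vac_tomo (s : R) (F : R -> R) (q p : R) : s < 1 ->
  measurable_fun setT F -> (forall x, 0 <= F x) ->
  fict_tomo s F q * vac_tomo s p = Lint (fun q' => F q' * Wcoh s q' 0 q p).
Proof.
move=> s1 mF F0; have a0 : 0 < 1 - s by rewrite subr_gt0.
have pa0 : 0 <= pi * (1 - s) by rewrite mulr_ge0 ?pi_ge0 ?ltW.
transitivity (Lint (fun q' =>
  (pi * (1 - s))^-1 * gauss (1 - s) p * (F q' * gauss (1 - s) (q - q')))).
  have Fg0 x : 0 <= F x * gauss (1 - s) (q - x) by rewrite mulr_ge0 ?gauss_ge0.
  rewrite LintZl ?mulr_ge0 ?invr_ge0 ?gauss_ge0 //; last exact: measurable_mul_gauss.
  by rewrite fict_tomoE /vac_tomo -(invr_sqrtr_sqr _ pa0) /gauss; ring.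
by congr Lint; apply/funext => q'; rewrite WcohE subr0; ring.
Qed.

End PhaseSpace.

Theorem mainTheorem2 (R : realType) (s : R) (hs : -1 <= s < 1)
  (P : R -> R -> R) (hP : is_pdf2 P)
  (G : R -> R) (hG : is_pdf1 G) (hGs : bounded_support G) :
  let W := sdist s P in
  let w := tomogram W in
  let F := marginal P in
  [/\ (forall q p, w q * fict_tomo s G p
                   = sdist s (fun q' p' => F q' * G p') q p),
      is_pdf2 (fun q' p' => F q' * G p'),
      Pclassical_sdist s (fun q p => w q * fict_tomo s G p),
      (forall q p, w q * vac_tomo s p = Lint (fun q' => F q' * Wcoh s q' 0 q p))
    & (forall q p, w q * w p = sdist s (fun q' p' => F q' * F p') q p)
      /\ Pclassical_sdist s (fun q p => w q * w p)].
Proof.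
move=> W w F; have /andP[_ s1] := hs.
have hF : is_pdf1 F := is_pdf1_marginal _ hP.
have [[mF F0 _] [mG G0 _]] := (hF, hG).
have wE q : w q = fict_tomo s F q by exact: tomogram_sdist.
have WfE q p : w q * fict_tomo s G p = sdist s (fun q' p' => F q' * G p') q p.
  by rewrite wE sdist_product.
have wwE q p : w q * w p = sdist s (fun q' p' => F q' * F p') q p.
  by rewrite !wE sdist_product.
split => //.
- exact: is_pdf2_product.
- by exists (fun q' p' => F q' * G p'); split => //; exact: is_pdf2_product.
- by move=> q p; rewrite wE fict_tomo_vac_tomo.
- by split => //; exists (fun q' p' => F q' * F p'); split => //; exact: is_pdf2_product.
Qed.
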